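(* Let $m \ge 2$ and $n \ge 2m$ be integers. Then for every real $r$ with $|r|<1$, $$\int_{-1}^1 \frac{U_n(s)(1-s^2)^{m-\frac{1}{2}}}{(s-r)^3}\,ds = (-1)^{m}\left(\frac{1}{2}\right)^{2m}\frac{\pi}{1-r^2}\sum_{j=0}^{2m-2}(-1)^j\binom{2m-2}{j}(n+3-2m+2j)\Big[(n+4-2m+2j)U_{n+1-2m+2j}(r)-(n+2-2m+2j)U_{n+3-2m+2j}(r)\Big],$$ where the integral is a Hadamard finite-part integral.
   Context: $U_k(s)=\frac{\sin((k+1)\cos^{-1}s)}{\sin(\cos^{-1}s)}$ is the Tchebyshev polynomial of the second kind. For a positive integer $\alpha\ge 2$ and $|r|<1$, the integral $\int_{-1}^1 \frac{D(s)}{(s-r)^\alpha}ds$ is understood in the Hadamard finite-part sense; in particular it satisfies $\int_{-1}^1 \frac{D(s)}{(s-r)^{\alpha}}ds=\frac{1}{\alpha-1}\frac{d}{dr}\int_{-1}^1\frac{D(s)}{(s-r)^{\alpha-1}}ds$, where for $\alpha-1=1$ the right-hand integral is a Cauchy principal value. $\binom{a}{j}=\frac{a!}{j!(a-j)!}$. *)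

From Stdlib Require Import Reals.
From Coquelicot Require Import Coquelicot.
Open Scope R_scope.

Definition chebU (k : nat) (s : R) : R :=
  sin (INR (k + 1) * acos s) / sin (acos s).

(* Cauchy principal value of int_{-1}^{1} D(s)/(s-r) ds:
   limit as e -> 0 (e <> 0, |e| used as the excision radius) of the
   integral over [-1, r-|e|] U [r+|e|, 1]. *)
Definition cauchy_pv (D : R -> R) (r : R) : R :=
  real (Lim (fun e => RInt (fun s => D s / (s - r)) (-1) (r - Rabs e)
                    + RInt (fun s => D s / (s - r)) (r + Rabs e) 1) 0).

(* Hadamard finite-part integral  int_{-1}^{1} D(s)/(s-r)^a ds  (a >= 1),
   defined by the relation of the paper:
   order 1 = Cauchy principal value,
   order (b+1) = (1/b) d/dr (order b). *)
Fixpoint hadamard_fp (D : R -> R) (a : nat) (r : R) {struct a} : R :=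
  match a with
  | O => 0
  | S O => cauchy_pv D r
  | S b => / INR b * Derive (hadamard_fp D b) r
  end.

From Stdlib Require Import Reals Lra Lia.
From Coquelicot Require Import Coquelicot.
Open Scope R_scope.

(* With s = cos θ the density is U_n(s) (1 - s^2)^(m - 1/2) = sin((n + 1) θ) sin^(2m - 2) θ,
   and expanding the even power of sin θ turns it into a binomial combination of the
   functions sin(K θ) = sqrt(1 - s^2) U_(K-1)(s), K = n + 3 - 2m + 2j.
   The principal value of  ∫ sin(K θ) / (s - r) ds  is  -π cos(K θ_r) = -π T_K(r): for K = 1
   by an explicit primitive, and in general from sin((K+1) θ) = 2 s sin(K θ) - sin((K-1) θ),
   splitting 2 s = 2 (s - r) + 2 r so that the first part cancels the singularity.
   The Hadamard integral of order 3 is half the second derivative of that principal value,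
   computed from T_K' = K U_(K-1) and 2 (1 - r^2) U_(K-1)' = (K+1) U_(K-2) - (K-1) U_K. *)

(* Coquelicot states these for abstract normed modules; on [R -> R] they unify with goals
   written with [Rplus], [Rminus] and [Rmult]. *)
Lemma continuous_Rplus (f g : R -> R) x :
  continuous f x -> continuous g x -> continuous (fun y => f y + g y) x.
Proof. apply (continuous_plus f g). Qed.

Lemma continuous_Rminus (f g : R -> R) x :
  continuous f x -> continuous g x -> continuous (fun y => f y - g y) x.
Proof. apply (continuous_minus f g). Qed.

Lemma continuous_Rmult (f g : R -> R) x :
  continuous f x -> continuous g x -> continuous (fun y => f y * g y) x.
Proof. apply (continuous_mult f g). Qed.

Lemma is_derive_Rplus (f g : R -> R) x df dg :
  is_derive f x df -> is_derive g x dg -> is_derive (fun y => f y + g y) x (df + dg).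
Proof. apply (is_derive_plus f g). Qed.

Lemma is_derive_Rminus (f g : R -> R) x df dg :
  is_derive f x df -> is_derive g x dg -> is_derive (fun y => f y - g y) x (df - dg).
Proof. apply (is_derive_minus f g). Qed.

Lemma is_derive_eq (f : R -> R) (x l l' : R) : is_derive f x l -> l = l' -> is_derive f x l'.
Proof. intros h <-; exact h. Qed.

Lemma continuous_of_ex_derive (f : R -> R) (x : R) : ex_derive f x -> continuous f x.
Proof. apply (ex_derive_continuous f). Qed.

Lemma RInt_Rplus (f g : R -> R) a b : ex_RInt f a b -> ex_RInt g a b ->
  RInt (fun s => f s + g s) a b = RInt f a b + RInt g a b.
Proof. apply (RInt_plus f g). Qed.

Lemma RInt_Rmult_l (c : R) (f : R -> R) a b : ex_RInt f a b ->
  RInt (fun s => c * f s) a b = c * RInt f a b.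
Proof. apply (RInt_scal f). Qed.

Lemma is_derive_ln_comp (h : R -> R) s d : is_derive h s d -> 0 < h s ->
  is_derive (fun t => ln (h t)) s (d / h s).
Proof.
  intros hd hpos; eapply is_derive_eq.
  - apply (is_derive_comp ln h); [apply is_derive_ln, hpos | exact hd].
  - unfold scal; simpl; unfold mult; simpl; field; lra.
Qed.

Lemma continuous_sum_f_R0 N (f : nat -> R -> R) x : (forall j, continuous (f j) x) ->
  continuous (fun y => sum_f_R0 (fun j => f j y) N) x.
Proof.
  intros hf; induction N as [| N IH]; [apply hf |].
  apply continuous_Rplus; [exact IH | apply hf].
Qed.

Lemma is_derive_sum_f_R0 N (f : nat -> R -> R) (df : nat -> R) x :
  (forall j, (j <= N)%nat -> is_derive (f j) x (df j)) ->
  is_derive (fun y => sum_f_R0 (fun j => f j y) N) x (sum_f_R0 df N).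
Proof.
  intros h; induction N as [| N IH]; [apply h; lia |].
  apply is_derive_Rplus; [apply IH; intros; apply h | apply h]; lia.
Qed.

Lemma continuous_RInt_upper (f : R -> R) (a t : R) : (forall s, continuous f s) ->
  continuous (RInt f a) t.
Proof.
  intros hf; apply (ex_derive_continuous (RInt f a) t); exists (f t).
  apply (@is_derive_RInt R_NormedModule f (RInt f a) a t); [| apply hf].
  apply filter_forall; intros y; apply (@RInt_correct R_CompleteNormedModule).
  apply (@ex_RInt_continuous R_CompleteNormedModule); intros; apply hf.
Qed.

Lemma is_lim_abs_shift (F G : R -> R) (x : R) : continuous F x -> continuous G x ->
  is_lim (fun e => F (x - Rabs e) + G (x + Rabs e)) 0 (F x + G x).
Proof.
  intros hF hG.
  set (h e := F (x - Rabs e) + G (x + Rabs e)).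
  assert (hh : continuous h 0).
  { unfold h.
    apply continuous_Rplus.
    - apply (continuous_comp (fun e => x - Rabs e) F).
      + apply continuous_Rminus; [apply continuous_const | apply continuous_Rabs].
      + rewrite Rabs_R0, Rminus_0_r; exact hF.
    - apply (continuous_comp (fun e => x + Rabs e) G).
      + apply continuous_Rplus; [apply continuous_const | apply continuous_Rabs].
      + rewrite Rabs_R0, Rplus_0_r; exact hG. }
  apply continuity_pt_filterlim, is_lim_continuity in hh.
  unfold h in hh at 2; rewrite Rabs_R0, Rminus_0_r, Rplus_0_r in hh; exact hh.
Qed.

Lemma locally'_neq (x : R) : Rbar_locally' x (fun e => e <> x).
Proof. exists (mkposreal 1 Rlt_0_1); intros y _ hy; exact hy. Qed.

(** * Arccosine and integrals of sin (k acos s) *)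

Lemma acos_m1 : acos (-1) = PI.
Proof. unfold acos; destruct (Rle_dec (-1) (-1)); [reflexivity | lra]. Qed.

Lemma continuity_pt_acos_1 : continuity_pt acos 1.
Proof.
  pose proof PI_RGT_0.
  intros eps heps.
  set (d := Rmin eps (PI / 2)).
  assert (hd : 0 < d) by (apply Rmin_glb_lt; lra).
  assert (hd_eps : d <= eps) by apply Rmin_l.
  assert (hd_pi : d <= PI / 2) by apply Rmin_r.
  assert (hcos : 0 <= cos d < 1).
  { split; [apply cos_ge_0; lra |].
    rewrite <- cos_0; apply cos_decreasing_1; lra. }
  exists (1 - cos d); split; [lra |].
  intros y [_ hy]; simpl in *; unfold R_dist in *.
  rewrite acos_1, Rminus_0_r.
  pose proof (acos_bound y) as hb.
  destruct (Rle_dec 1 y) as [h1 | h1].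
  - unfold acos; destruct (Rle_dec y (-1)); [lra |].
    destruct (Rle_dec 1 y); [rewrite Rabs_R0; lra | lra].
  - apply Rabs_def2 in hy.
    rewrite Rabs_right by lra.
    apply Rlt_le_trans with d; [| exact hd_eps].
    (* cos is decreasing on [0, PI], and cos (acos y) = y > cos d *)
    destruct (Rlt_le_dec (acos y) d) as [h | h]; [exact h | exfalso].
    assert (hle : cos (acos y) <= cos d).
    { destruct h as [h | ->]; [left; apply cos_decreasing_1; lra | lra]. }
    rewrite cos_acos in hle; lra.
Qed.

Lemma continuous_acos x : continuous acos x.
Proof.
  destruct (Rlt_le_dec x (-1)) as [hlt | hge].
  - apply continuous_ext_loc with (fun _ => PI); [| apply continuous_const].
    apply (filter_imp (fun y => y < -1)); [| exact (open_lt (-1) x hlt)].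
    intros y hy; unfold acos; destruct (Rle_dec y (-1)); [reflexivity | lra].
  - destruct (Rlt_le_dec 1 x) as [hgt | hle].
    + apply continuous_ext_loc with (fun _ => 0); [| apply continuous_const].
      apply (filter_imp (fun y => 1 < y)); [| exact (open_gt 1 x hgt)].
      intros y hy; unfold acos.
      destruct (Rle_dec y (-1)); [lra |]; destruct (Rle_dec 1 y); [reflexivity | lra].
    + destruct hle as [hlt1 | ->]; [| apply continuity_pt_filterlim, continuity_pt_acos_1].
      destruct hge as [hgt1 | <-].
      * apply continuity_pt_filterlim, derivable_continuous_pt, derivable_pt_acos; lra.
      * (* acos (-y) = PI - acos y transfers continuity from 1 to -1 *)
        apply (continuous_ext (fun y => PI - acos (- y))).
        { intros y; rewrite acos_opp; simpl; lra. }
        apply continuous_Rminus; [apply continuous_const |].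
        apply (continuous_comp Ropp acos).
        { exact (continuous_opp (fun y : R => y) (-1) (continuous_id _)). }
        replace (- -1) with 1 by ring; apply continuity_pt_filterlim, continuity_pt_acos_1.
Qed.

Lemma sqrt_1_sub_sq_pos x : -1 < x < 1 -> 0 < sqrt (1 - x ^ 2).
Proof. intros hx; apply sqrt_lt_R0; nra. Qed.

Lemma sqrt_1_sub_sq_mul_self x : -1 <= x <= 1 -> sqrt (1 - x ^ 2) * sqrt (1 - x ^ 2) = 1 - x ^ 2.
Proof. intros hx; apply sqrt_sqrt; nra. Qed.

Lemma sin_acos_sqrt x : -1 <= x <= 1 -> sin (acos x) = sqrt (1 - x ^ 2).
Proof. intros hx; rewrite sin_acos by exact hx; unfold Rsqr; f_equal; ring. Qed.

Lemma continuous_sqrt_1_sub_sq s : continuous (fun t => sqrt (1 - t ^ 2)) s.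
Proof.
  apply continuous_sqrt_comp, continuous_Rminus; [apply continuous_const |].
  apply continuous_of_ex_derive; auto_derive; exact I.
Qed.

Lemma is_derive_sqrt_1_sub_sq s : -1 < s < 1 ->
  is_derive (fun t => sqrt (1 - t ^ 2)) s (- s / sqrt (1 - s ^ 2)).
Proof.
  intros hs; pose proof (sqrt_1_sub_sq_pos s hs).
  eapply is_derive_eq.
  - apply (is_derive_sqrt (fun t => 1 - t ^ 2)); [auto_derive; [exact I | reflexivity] | nra].
  - field; lra.
Qed.

Lemma is_derive_acos x : -1 < x < 1 -> is_derive acos x (- / sqrt (1 - x ^ 2)).
Proof.
  intros hx; apply is_derive_Reals.
  apply (derive_pt_eq_1 _ _ _ (derivable_pt_acos x hx)).
  rewrite derive_pt_acos; unfold Rsqr; replace (x * x) with (x ^ 2) by ring.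
  field; apply Rgt_not_eq, sqrt_1_sub_sq_pos, hx.
Qed.

Lemma continuous_sin_mul_acos K s : continuous (fun t => sin (K * acos t)) s.
Proof. apply continuous_sin_comp, (continuous_scal_r K acos), continuous_acos. Qed.

Lemma is_derive_sin_mul_acos K x : -1 < x < 1 ->
  is_derive (fun t => sin (K * acos t)) x (- K * cos (K * acos x) / sqrt (1 - x ^ 2)).
Proof.
  intros hx; eapply is_derive_eq.
  - apply (is_derive_comp sin (fun t => K * acos t)); [apply is_derive_sin |].
    apply is_derive_scal, is_derive_acos, hx.
  - unfold scal; simpl; unfold mult; simpl.
    field; apply Rgt_not_eq, sqrt_1_sub_sq_pos, hx.
Qed.

Lemma is_derive_cos_mul_acos K x : -1 < x < 1 ->
  is_derive (fun t => cos (K * acos t)) x (K * sin (K * acos x) / sqrt (1 - x ^ 2)).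
Proof.
  intros hx; eapply is_derive_eq.
  - apply (is_derive_comp cos (fun t => K * acos t)); [apply is_derive_cos |].
    apply is_derive_scal, is_derive_acos, hx.
  - unfold scal; simpl; unfold mult; simpl.
    field; apply Rgt_not_eq, sqrt_1_sub_sq_pos, hx.
Qed.

Lemma sin_mul_acos_rec K s : -1 <= s <= 1 ->
  sin ((K + 1) * acos s) = 2 * s * sin (K * acos s) - sin ((K - 1) * acos s).
Proof.
  intros hs.
  replace ((K + 1) * acos s) with (K * acos s + acos s) by ring.
  replace ((K - 1) * acos s) with (K * acos s - acos s) by ring.
  rewrite sin_plus, sin_minus, cos_acos by exact hs; ring.
Qed.

Lemma cos_mul_acos_rec K s : -1 <= s <= 1 ->
  cos ((K + 1) * acos s) = 2 * s * cos (K * acos s) - cos ((K - 1) * acos s).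
Proof.
  intros hs.
  replace ((K + 1) * acos s) with (K * acos s + acos s) by ring.
  replace ((K - 1) * acos s) with (K * acos s - acos s) by ring.
  rewrite cos_plus, cos_minus, cos_acos by exact hs; ring.
Qed.

Lemma RInt_open_antiderivative (f F : R -> R) a b d : a < b -> 0 < d ->
  (forall x, a - d < x < b + d -> continuous f x) ->
  (forall x, a < x < b -> is_derive F x (f x)) ->
  continuous F a -> continuous F b ->
  (RInt f a b : R) = F b - F a.
Proof.
  intros hab hd hf hF hFa hFb.
  assert (hint : forall u v, a - d < u < b + d -> a - d < v < b + d -> ex_RInt f u v).
  { intros u v hu hv; apply (@ex_RInt_continuous R_CompleteNormedModule).
    intros z hz; apply hf; split.
    - apply Rlt_le_trans with (Rmin u v); [apply Rmin_glb_lt |]; lra.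
    - apply Rle_lt_trans with (Rmax u v); [| apply Rmax_lub_lt]; lra. }
  assert (hPhi : forall t, a - d < t < b + d -> is_derive (RInt f a) t (f t)).
  { intros t ht; apply (@is_derive_RInt R_NormedModule f (RInt f a) a t); [| apply hf; lra].
    apply (locally_interval _ t (a - d) (b + d)); simpl; try lra.
    intros y h1 h2; apply (@RInt_correct R_CompleteNormedModule), hint; simpl in *; lra. }
  (* mean value theorem for RInt f a - F, whose derivative vanishes on ]a, b[ *)
  destruct (MVT_gen (fun t => RInt f a t - F t) a b (fun t => f t - f t)) as [c [_ E]].
  - rewrite Rmin_left, Rmax_right by lra; intros x hx.
    apply (is_derive_minus (RInt f a) F); [apply hPhi | apply hF]; lra.
  - rewrite Rmin_left, Rmax_right by lra; intros x hx.
    apply continuity_pt_filterlim, (continuous_minus (RInt f a) F).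
    + apply ex_derive_continuous; eexists; apply hPhi; lra.
    + destruct (Req_dec x a) as [-> | hxa]; [exact hFa |].
      destruct (Req_dec x b) as [-> | hxb]; [exact hFb |].
      apply ex_derive_continuous; eexists; apply hF; lra.
  - rewrite RInt_point in E; unfold zero in E; simpl in E; lra.
Qed.

Lemma RInt_sin_acos : RInt (fun s => sin (1 * acos s)) (-1) 1 = PI / 2.
Proof.
  set (F s := / 4 * sin (2 * acos s) - / 2 * acos s).
  assert (hF : forall s, continuous F s).
  { intros s; apply continuous_Rminus; apply continuous_Rmult;
      try apply continuous_const; [apply continuous_sin_mul_acos | apply continuous_acos]. }
  rewrite (RInt_open_antiderivative _ F (-1) 1 1); try lra; try apply hF.
  - unfold F; rewrite acos_1, acos_m1, Rmult_0_r, sin_0, sin_2PI; lra.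
  - intros; apply continuous_sin_mul_acos.
  - intros x hx; eapply is_derive_eq.
    + apply is_derive_Rminus; apply is_derive_scal;
        [apply is_derive_sin_mul_acos | apply is_derive_acos]; exact hx.
    + pose proof (sqrt_1_sub_sq_pos x hx); pose proof (sqrt_1_sub_sq_mul_self x ltac:(lra)) as hsq.
      rewrite cos_2a_sin, Rmult_1_l, sin_acos_sqrt by lra.
      field [hsq]; lra.
Qed.

Lemma sin_INR_mul_PI k : sin (INR k * PI) = 0.
Proof. apply sin_eq_0_1; exists (Z.of_nat k); rewrite <- INR_IZR_INZ; reflexivity. Qed.

Lemma RInt_sin_mul_acos k : (2 <= k)%nat -> RInt (fun s => sin (INR k * acos s)) (-1) 1 = 0.
Proof.
  intros hk; set (K := INR k).
  assert (hK : 2 <= K) by (apply (le_INR 2) in hk; exact hk).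
  set (F s := / (2 * (K + 1)) * sin ((K + 1) * acos s) - / (2 * (K - 1)) * sin ((K - 1) * acos s)).
  assert (hF : forall s, continuous F s).
  { intros s; apply continuous_Rminus; apply continuous_Rmult;
      try apply continuous_const; apply continuous_sin_mul_acos. }
  rewrite (RInt_open_antiderivative _ F (-1) 1 1); try lra; try apply hF.
  - assert (hp : sin ((K + 1) * PI) = 0) by (unfold K; rewrite <- S_INR; apply sin_INR_mul_PI).
    assert (hm : sin ((K - 1) * PI) = 0).
    { unfold K; destruct k as [| k]; [lia |].
      rewrite S_INR; replace (INR k + 1 - 1) with (INR k) by ring; apply sin_INR_mul_PI. }
    unfold F; rewrite acos_1, acos_m1, !Rmult_0_r, sin_0, hp, hm; lra.
  - intros; apply continuous_sin_mul_acos.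
  - intros x hx; eapply is_derive_eq.
    + apply is_derive_Rminus; apply is_derive_scal, is_derive_sin_mul_acos, hx.
    + pose proof (sqrt_1_sub_sq_pos x hx).
      replace ((K + 1) * acos x) with (K * acos x + acos x) by ring.
      replace ((K - 1) * acos x) with (K * acos x - acos x) by ring.
      rewrite cos_plus, cos_minus, sin_acos_sqrt by lra.
      field; lra.
Qed.

(** * Principal values *)

Definition pv_approx (f : R -> R) (x e : R) : R :=
  RInt (fun s => f s / (s - x)) (-1) (x - Rabs e) + RInt (fun s => f s / (s - x)) (x + Rabs e) 1.

Lemma cauchy_pv_is_lim (f : R -> R) x (l : R) : is_lim (pv_approx f x) 0 l -> cauchy_pv f x = l.
Proof.
  intros h; change (real (Lim (pv_approx f x) 0) = l).
  rewrite (is_lim_unique _ _ _ h); reflexivity.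
Qed.

Lemma locally'_pv_approx_inside x : -1 < x < 1 ->
  Rbar_locally' 0 (fun e => e <> 0 /\ -1 < x - Rabs e /\ x + Rabs e < 1).
Proof.
  intros hx; assert (hd : 0 < Rmin (1 + x) (1 - x)) by (apply Rmin_glb_lt; lra).
  exists (mkposreal _ hd); intros e he he0; simpl in he.
  unfold ball in he; simpl in he; unfold AbsRing_ball, abs, minus, plus, opp in he; simpl in he.
  rewrite Ropp_0, Rplus_0_r in he.
  pose proof (Rmin_l (1 + x) (1 - x)); pose proof (Rmin_r (1 + x) (1 - x)).
  repeat split; [exact he0 | lra | lra].
Qed.

Lemma ex_RInt_div_sub (f : R -> R) x a b : (forall s, continuous f s) ->
  x < Rmin a b \/ Rmax a b < x -> ex_RInt (fun s => f s / (s - x)) a b.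
Proof.
  intros hf hx; apply (@ex_RInt_continuous R_CompleteNormedModule); intros z hz.
  apply continuous_Rmult; [apply hf |].
  apply continuous_Rinv_comp; [| lra].
  apply continuous_Rminus; [apply continuous_id | apply continuous_const].
Qed.

Lemma pv_approx_pieces_avoid x e : -1 < x < 1 -> e <> 0 ->
  Rmax (-1) (x - Rabs e) < x /\ x < Rmin (x + Rabs e) 1.
Proof.
  intros hx he; pose proof (Rabs_pos_lt e he).
  split; [apply Rmax_lub_lt | apply Rmin_glb_lt]; lra.
Qed.

Lemma pv_approx_plus (f g : R -> R) x e :
  (forall s, continuous f s) -> (forall s, continuous g s) -> -1 < x < 1 -> e <> 0 ->
  pv_approx (fun s => f s + g s) x e = pv_approx f x e + pv_approx g x e.
Proof.
  intros hf hg hx he; unfold pv_approx.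
  destruct (pv_approx_pieces_avoid x e hx he).
  rewrite !(RInt_ext (fun s => (f s + g s) / (s - x)) (fun s => f s / (s - x) + g s / (s - x)))
    by (intros; simpl; unfold Rdiv; ring).
  rewrite !RInt_Rplus by (apply ex_RInt_div_sub; auto).
  ring.
Qed.

Lemma pv_approx_scal (c : R) (f : R -> R) x e :
  (forall s, continuous f s) -> -1 < x < 1 -> e <> 0 ->
  pv_approx (fun s => c * f s) x e = c * pv_approx f x e.
Proof.
  intros hf hx he; unfold pv_approx.
  destruct (pv_approx_pieces_avoid x e hx he).
  rewrite !(RInt_ext (fun s => c * f s / (s - x)) (fun s => c * (f s / (s - x))))
    by (intros; simpl; unfold Rdiv; ring).
  rewrite !RInt_Rmult_l by (apply ex_RInt_div_sub; auto).
  ring.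
Qed.

Lemma is_lim_pv_approx_plus (f g : R -> R) x (lf lg : R) :
  (forall s, continuous f s) -> (forall s, continuous g s) -> -1 < x < 1 ->
  is_lim (pv_approx f x) 0 lf -> is_lim (pv_approx g x) 0 lg ->
  is_lim (pv_approx (fun s => f s + g s) x) 0 (lf + lg).
Proof.
  intros hf hg hx hlf hlg.
  apply (is_lim_ext_loc (fun e => pv_approx f x e + pv_approx g x e));
    [| exact (is_lim_plus' _ _ _ _ _ hlf hlg)].
  apply (filter_imp (fun e => e <> 0)); [| apply locally'_neq].
  intros e he; symmetry; apply pv_approx_plus; assumption.
Qed.

Lemma is_lim_pv_approx_scal (c : R) (f : R -> R) x (l : R) :
  (forall s, continuous f s) -> -1 < x < 1 ->
  is_lim (pv_approx f x) 0 l -> is_lim (pv_approx (fun s => c * f s) x) 0 (c * l).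
Proof.
  intros hf hx hl.
  apply (is_lim_ext_loc (fun e => c * pv_approx f x e)); [| exact (is_lim_scal_l _ c _ _ hl)].
  apply (filter_imp (fun e => e <> 0)); [| apply locally'_neq].
  intros e he; symmetry; apply pv_approx_scal; assumption.
Qed.

Lemma is_lim_pv_approx_sum N (w : nat -> R) (f : nat -> R -> R) (l : nat -> R) x :
  (forall j s, continuous (f j) s) -> -1 < x < 1 ->
  (forall j, (j <= N)%nat -> is_lim (pv_approx (f j) x) 0 (l j)) ->
  is_lim (pv_approx (fun s => sum_f_R0 (fun j => w j * f j s) N) x) 0
    (sum_f_R0 (fun j => w j * l j) N).
Proof.
  intros hf hx hl; induction N as [| N IH].
  - apply is_lim_pv_approx_scal; auto.
  - apply is_lim_pv_approx_plus; auto.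
    + intros s; apply continuous_sum_f_R0; intros j.
      apply continuous_Rmult; auto using continuous_const.
    + intros s; apply continuous_Rmult; auto using continuous_const.
    + apply is_lim_pv_approx_scal; auto.
Qed.

Lemma is_lim_pv_approx_ext (f g : R -> R) x (l : R) : -1 < x < 1 ->
  (forall s, -1 < s < 1 -> f s = g s) ->
  is_lim (pv_approx g x) 0 l -> is_lim (pv_approx f x) 0 l.
Proof.
  intros hx hfg; apply is_lim_ext_loc.
  apply (filter_imp (fun e => e <> 0 /\ -1 < x - Rabs e /\ x + Rabs e < 1));
    [intros e [he [hl hr]] | exact (locally'_pv_approx_inside x hx)].
  pose proof (Rabs_pos e).
  unfold pv_approx; f_equal; apply RInt_ext;
    [rewrite Rmin_left, Rmax_right by lra | rewrite Rmin_left, Rmax_right by lra];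
    intros s hs; rewrite hfg by lra; reflexivity.
Qed.

Lemma is_lim_pv_approx_mul_sub (f : R -> R) x : (forall s, continuous f s) -> -1 < x < 1 ->
  is_lim (pv_approx (fun s => (s - x) * f s) x) 0 (RInt f (-1) 1).
Proof.
  intros hf hx.
  set (Phi := RInt f (-1)).
  assert (hint : forall a b, ex_RInt f a b)
    by (intros; apply (@ex_RInt_continuous R_CompleteNormedModule); intros; apply hf).
  (* away from the excised point the factor s - x cancels, and Chasles splits RInt f (-1) 1 *)
  assert (hchasles : forall t, RInt f t 1 = Phi 1 - Phi t).
  { intros t; unfold Phi; rewrite <- (RInt_Chasles f (-1) t 1) by auto; unfold plus; simpl; lra. }
  apply (is_lim_ext_loc (fun e => Phi (x - Rabs e) + (Phi 1 - Phi (x + Rabs e)))).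
  - apply (filter_imp (fun e => e <> 0)); [| apply locally'_neq].
    intros e he; unfold pv_approx; rewrite <- hchasles.
    destruct (pv_approx_pieces_avoid x e hx he).
    f_equal; apply RInt_ext; intros s hs; simpl; field; lra.
  - assert (hPhi : forall t, continuous Phi t) by (intros; apply continuous_RInt_upper, hf).
    pose proof (is_lim_abs_shift Phi (fun t => Phi 1 - Phi t) x (hPhi x)
      (continuous_Rminus _ _ x (continuous_const _ _) (hPhi x))) as hl.
    cbv beta in hl; replace (Phi x + (Phi 1 - Phi x)) with (Phi 1) in hl by lra; exact hl.
Qed.

(* A primitive of sqrt (1 - s^2) / (s - x) on either side of x; [pv_primitive_reg] is its
   part continuous on [-1, 1], and the logarithmic singularity takes the same value at
   x - |e| and x + |e|, so it cancels in [pv_approx]. *)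
Definition pv_primitive_reg (x s : R) : R :=
  sqrt (1 - s ^ 2) + x * acos s
  - sqrt (1 - x ^ 2) * ln (1 - x * s + sqrt (1 - x ^ 2) * sqrt (1 - s ^ 2)).

Definition pv_primitive (x s : R) : R :=
  pv_primitive_reg x s + sqrt (1 - x ^ 2) / 2 * ln ((s - x) ^ 2).

Lemma pv_primitive_ln_arg_pos x s : -1 < x < 1 -> -1 <= s <= 1 ->
  0 < 1 - x * s + sqrt (1 - x ^ 2) * sqrt (1 - s ^ 2).
Proof.
  intros hx hs.
  assert (0 <= sqrt (1 - x ^ 2) * sqrt (1 - s ^ 2)) by (apply Rmult_le_pos; apply sqrt_pos).
  assert (x * s < 1) by (destruct (Rle_dec 0 s); nra).
  lra.
Qed.

Lemma is_derive_pv_primitive x s : -1 < x < 1 -> -1 < s < 1 -> s <> x ->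
  is_derive (pv_primitive x) s (sin (1 * acos s) / (s - x)).
Proof.
  intros hx hs hsx.
  pose proof (sqrt_1_sub_sq_pos s hs) as hw.
  pose proof (pv_primitive_ln_arg_pos x s hx ltac:(lra)) as hN.
  eapply is_derive_eq.
  - apply is_derive_Rplus; [apply is_derive_Rminus; [apply is_derive_Rplus |] |].
    + apply is_derive_sqrt_1_sub_sq, hs.
    + apply is_derive_scal, is_derive_acos, hs.
    + apply is_derive_scal, is_derive_ln_comp; [| exact hN].
      apply is_derive_Rplus; [auto_derive; [exact I | reflexivity] |].
      apply is_derive_scal, is_derive_sqrt_1_sub_sq, hs.
    + apply is_derive_scal, is_derive_ln_comp; [auto_derive; [exact I | reflexivity] |].
      apply pow2_gt_0; lra.
  - rewrite (Rmult_1_l (acos s)), sin_acos_sqrt by lra.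
    pose proof (sqrt_1_sub_sq_mul_self s ltac:(lra)) as hw2.
    pose proof (sqrt_1_sub_sq_mul_self x ltac:(lra)) as ha2.
    assert (s - x <> 0) by lra.
    set (w := sqrt (1 - s ^ 2)) in *; set (a := sqrt (1 - x ^ 2)) in *.
    field [hw2 ha2]; repeat split; lra.
Qed.

Lemma continuous_pv_primitive_reg x s : -1 < x < 1 -> -1 <= s <= 1 ->
  continuous (pv_primitive_reg x) s.
Proof.
  intros hx hs; unfold pv_primitive_reg.
  apply continuous_Rminus; [apply continuous_Rplus |].
  - apply continuous_sqrt_1_sub_sq.
  - apply continuous_Rmult; [apply continuous_const | apply continuous_acos].
  - apply continuous_Rmult; [apply continuous_const |].
    apply (continuous_comp (fun t => 1 - x * t + sqrt (1 - x ^ 2) * sqrt (1 - t ^ 2)) ln).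
    + apply continuous_Rplus; [apply continuous_of_ex_derive; auto_derive; exact I |].
      apply continuous_Rmult; [apply continuous_const | apply continuous_sqrt_1_sub_sq].
    + apply continuous_ln, pv_primitive_ln_arg_pos; assumption.
Qed.

Lemma continuous_pv_primitive x s : -1 < x < 1 -> -1 <= s <= 1 -> s <> x ->
  continuous (pv_primitive x) s.
Proof.
  intros hx hs hsx; unfold pv_primitive.
  apply continuous_Rplus; [apply continuous_pv_primitive_reg; assumption |].
  apply continuous_Rmult; [apply continuous_const |].
  apply (continuous_comp (fun t => (t - x) ^ 2) ln);
    [apply continuous_of_ex_derive; auto_derive; exact I |].
  apply continuous_ln, pow2_gt_0; lra.
Qed.

Lemma pv_primitive_1 x : -1 < x < 1 -> pv_primitive x 1 = 0.
Proof.
  intros hx; unfold pv_primitive, pv_primitive_reg.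
  replace (1 - 1 ^ 2) with 0 by ring; rewrite sqrt_0, acos_1.
  replace (1 - x * 1 + sqrt (1 - x ^ 2) * 0) with (1 - x) by ring.
  rewrite ln_pow by lra; simpl INR; field.
Qed.

Lemma pv_primitive_m1 x : -1 < x < 1 -> pv_primitive x (-1) = x * PI.
Proof.
  intros hx; unfold pv_primitive, pv_primitive_reg.
  replace (1 - (-1) ^ 2) with 0 by ring; rewrite sqrt_0, acos_m1.
  replace (1 - x * -1 + sqrt (1 - x ^ 2) * 0) with (1 + x) by ring.
  replace ((-1 - x) ^ 2) with ((1 + x) ^ 2) by ring.
  rewrite ln_pow by lra; simpl INR; field.
Qed.

Lemma pv_approx_sin_acos x e : -1 < x < 1 -> e <> 0 -> -1 < x - Rabs e -> x + Rabs e < 1 ->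
  pv_approx (fun s => sin (1 * acos s)) x e
  = pv_primitive_reg x (x - Rabs e) - pv_primitive_reg x (x + Rabs e) - x * PI.
Proof.
  intros hx he hl hr; pose proof (Rabs_pos_lt e he).
  assert (hf : forall s, s <> x -> continuous (fun t => sin (1 * acos t) / (t - x)) s).
  { intros s hs; apply continuous_Rmult; [apply continuous_sin_mul_acos |].
    apply continuous_Rinv_comp; [| lra].
    apply continuous_Rminus; [apply continuous_id | apply continuous_const]. }
  unfold pv_approx.
  rewrite (RInt_open_antiderivative _ (pv_primitive x) (-1) (x - Rabs e) (Rabs e / 2)),
          (RInt_open_antiderivative _ (pv_primitive x) (x + Rabs e) 1 (Rabs e / 2));
    try lra; try (intros; apply hf; lra); try (intros; apply is_derive_pv_primitive; lra);
    try (apply continuous_pv_primitive; lra).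
  rewrite pv_primitive_1, pv_primitive_m1 by lra; unfold pv_primitive.
  replace (x - Rabs e - x) with (- Rabs e) by ring; replace (x + Rabs e - x) with (Rabs e) by ring.
  replace ((- Rabs e) ^ 2) with (Rabs e ^ 2) by ring; ring.
Qed.

Lemma is_lim_pv_sin_acos x : -1 < x < 1 ->
  is_lim (pv_approx (fun s => sin (1 * acos s)) x) 0 (- PI * x).
Proof.
  intros hx.
  apply (is_lim_ext_loc (fun e => pv_primitive_reg x (x - Rabs e)
                                  + (- (x * PI) - pv_primitive_reg x (x + Rabs e)))).
  - apply (filter_imp (fun e => e <> 0 /\ -1 < x - Rabs e /\ x + Rabs e < 1));
      [intros e [he [hl hr]] | exact (locally'_pv_approx_inside x hx)].
    rewrite pv_approx_sin_acos by assumption; ring.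
  - assert (hc : continuous (pv_primitive_reg x) x) by (apply continuous_pv_primitive_reg; lra).
    pose proof (is_lim_abs_shift (pv_primitive_reg x) (fun t => - (x * PI) - pv_primitive_reg x t)
      x hc (continuous_Rminus _ _ x (continuous_const _ _) hc)) as hl.
    cbv beta in hl.
    replace (- PI * x) with (pv_primitive_reg x x + (- (x * PI) - pv_primitive_reg x x)) by ring.
    exact hl.
Qed.

Lemma is_lim_pv_sin_0 x : is_lim (pv_approx (fun s => sin (INR 0 * acos s)) x) 0 0.
Proof.
  apply (is_lim_ext (fun _ => 0)); [| apply is_lim_const].
  intros e; unfold pv_approx; simpl INR.
  rewrite !(RInt_ext (fun s => sin (0 * acos s) / (s - x)) (fun _ => 0))
    by (intros; rewrite Rmult_0_l, sin_0; simpl; unfold Rdiv; ring).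
  rewrite !RInt_const; unfold scal; simpl; unfold mult; simpl; ring.
Qed.

Lemma is_lim_pv_sin_mul_acos_succ k x (l0 l1 : R) : -1 < x < 1 ->
  is_lim (pv_approx (fun s => sin (INR k * acos s)) x) 0 l0 ->
  is_lim (pv_approx (fun s => sin (INR (S k) * acos s)) x) 0 l1 ->
  is_lim (pv_approx (fun s => sin (INR (S (S k)) * acos s)) x) 0
    (2 * RInt (fun s => sin (INR (S k) * acos s)) (-1) 1 + 2 * x * l1 - l0).
Proof.
  intros hx hl0 hl1.
  set (K := INR (S k)).
  assert (hK : INR (S (S k)) = K + 1 /\ INR k = K - 1) by (unfold K; rewrite !S_INR; split; ring).
  rewrite (proj1 hK); rewrite (proj2 hK) in hl0.
  (* 2 s = 2 (s - x) + 2 x: the first part cancels the singularity *)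
  apply (is_lim_pv_approx_ext _ (fun s => 2 * ((s - x) * sin (K * acos s))
    + 2 * x * sin (K * acos s) + (-1) * sin ((K - 1) * acos s)));
    [exact hx | intros s hs; rewrite sin_mul_acos_rec by lra; ring |].
  replace (2 * RInt (fun s => sin (K * acos s)) (-1) 1 + 2 * x * l1 - l0)
    with (2 * RInt (fun s => sin (K * acos s)) (-1) 1 + 2 * x * l1 + -1 * l0) by ring.
  assert (hc : forall K' s, continuous (fun t => sin (K' * acos t)) s)
    by apply continuous_sin_mul_acos.
  assert (hscal : forall (c : R) (f : R -> R), (forall s, continuous f s) ->
                  forall s, continuous (fun t => c * f t) s)
    by (intros c f hf s; apply continuous_Rmult; [apply continuous_const | apply hf]).
  assert (hcx : forall s, continuous (fun t => (t - x) * sin (K * acos t)) s).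
  { intros s; apply continuous_Rmult; [| apply hc].
    apply continuous_Rminus; [apply continuous_id | apply continuous_const]. }
  pose proof (is_lim_pv_approx_scal 2 _ x _ hcx hx (is_lim_pv_approx_mul_sub _ x (hc K) hx)) as h1.
  pose proof (is_lim_pv_approx_scal (2 * x) _ x _ (hc K) hx hl1) as h2.
  pose proof (is_lim_pv_approx_scal (-1) _ x _ (hc (K - 1)) hx hl0) as h3.
  apply is_lim_pv_approx_plus; auto.
  - intros s; apply continuous_Rplus; apply hscal; auto.
  - apply is_lim_pv_approx_plus; auto.
Qed.

Lemma is_lim_pv_sin_mul_acos k x : -1 < x < 1 ->
  is_lim (pv_approx (fun s => sin (INR (S k) * acos s)) x) 0 (- PI * cos (INR (S k) * acos x)).
Proof.
  intros hx.
  set (P k := is_lim (pv_approx (fun s => sin (INR k * acos s)) x) 0 (- PI * cos (INR k * acos x))).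
  enough (h : forall k, P (S k) /\ P (S (S k))) by exact (proj1 (h k)).
  assert (hP1 : P 1%nat).
  { unfold P; simpl INR; rewrite Rmult_1_l, cos_acos by lra.
    apply is_lim_pv_sin_acos, hx. }
  clear k; intros k; induction k as [| k [hPk hPSk]]; split.
  - exact hP1.
  - pose proof (is_lim_pv_sin_mul_acos_succ 0 x _ _ hx (is_lim_pv_sin_0 x) hP1) as h.
    change (INR 1) with 1 in h; change (INR 2) with (1 + 1) in h.
    rewrite RInt_sin_acos, Rmult_1_l, cos_acos in h by lra.
    unfold P; change (INR 2) with (1 + 1).
    rewrite cos_mul_acos_rec, Rmult_1_l, cos_acos, Rminus_diag, Rmult_0_l, cos_0 by lra.
    replace (- PI * (2 * x * x - 1)) with (2 * (PI / 2) + 2 * x * (- PI * x) - 0) by field; exact h.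
  - exact hPSk.
  - pose proof (is_lim_pv_sin_mul_acos_succ (S k) x _ _ hx hPk hPSk) as h.
    rewrite RInt_sin_mul_acos in h by lia.
    unfold P; rewrite (S_INR (S (S k))), cos_mul_acos_rec by lra.
    replace (INR (S (S k)) - 1) with (INR (S k)) by (rewrite (S_INR (S k)); ring).
    rewrite <- (S_INR (S (S k))).
    set (c1 := cos (INR (S k) * acos x)) in *; set (c2 := cos (INR (S (S k)) * acos x)) in *.
    replace (- PI * (2 * x * c2 - c1)) with (2 * 0 + 2 * x * (- PI * c2) - - PI * c1) by ring.
    exact h.
Qed.

(** * Expanding the density *)

(* Unlike [Binomial.C], [binom n k] vanishes for [k > n], so Pascal's rule holds without
   side conditions. *)
Fixpoint binom (n k : nat) : R :=
  match n, k with
  | _, O => 1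
  | O, S _ => 0
  | S n', S k' => binom n' k' + binom n' (S k')
  end.

Lemma binom_gt n k : (n < k)%nat -> binom n k = 0.
Proof.
  revert k; induction n as [| n IH]; intros [| k] hk; try lia; [reflexivity |].
  simpl; rewrite !IH by lia; ring.
Qed.

Lemma binom_C n k : (k <= n)%nat -> binom n k = Binomial.C n k.
Proof.
  revert k; induction n as [| n IH]; intros [| k] hk;
    try (simpl; rewrite C_n_0; reflexivity); [lia |].
  simpl; destruct (Nat.eq_dec k n) as [-> | hkn].
  - assert (hdiag : forall p, Binomial.C p p = 1).
    { intros p; unfold Binomial.C; rewrite Nat.sub_diag; simpl Factorial.fact.
      simpl INR; rewrite Rmult_1_r; apply Rinv_r, INR_fact_neq_0. }
    rewrite (binom_gt n (S n)), IH, Rplus_0_r, !hdiag by lia; reflexivity.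
  - rewrite !IH by lia; apply pascal; lia.
Qed.

Lemma sum_binom_succ M (F : nat -> R) :
  sum_f_R0 (fun j => binom (S M) j * F j) (S M)
  = sum_f_R0 (fun j => binom M j * (F j + F (S j))) M.
Proof.
  rewrite decomp_sum by lia; simpl pred.
  assert (hlast : sum_f_R0 (fun i => binom M (S i) * F (S i)) M
                  = sum_f_R0 (fun j => binom M j * F j) M - F O).
  { pose proof (decomp_sum (fun j => binom M j * F j) (S M) ltac:(lia)) as E.
    rewrite tech5, (binom_gt M (S M)) in E by lia; simpl pred in E.
    destruct M; simpl binom in E |- *; lra. }
  replace (sum_f_R0 (fun i => binom (S M) (S i) * F (S i)) M)
    with (sum_f_R0 (fun i => binom M i * F (S i)) M + sum_f_R0 (fun i => binom M (S i) * F (S i)) M)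
    by (rewrite <- sum_plus; apply sum_eq; intros; simpl; ring).
  replace (sum_f_R0 (fun j => binom M j * (F j + F (S j))) M)
    with (sum_f_R0 (fun j => binom M j * F j) M + sum_f_R0 (fun j => binom M j * F (S j)) M)
    by (rewrite <- sum_plus; apply sum_eq; intros; ring).
  rewrite hlast; simpl binom; ring.
Qed.

Definition binom_sin_sum (M : nat) (t y : R) : R :=
  sum_f_R0 (fun j => binom M j * ((-1) ^ j * sin (y + (2 * INR j - INR M) * t))) M.

Lemma binom_sin_sum_succ M t y :
  binom_sin_sum (S M) t y = binom_sin_sum M t (y - t) - binom_sin_sum M t (y + t).
Proof.
  unfold binom_sin_sum; rewrite sum_binom_succ, <- minus_sum.
  apply sum_eq; intros j _; rewrite !S_INR; simpl pow.
  replace (y + (2 * INR j - (INR M + 1)) * t) with (y - t + (2 * INR j - INR M) * t) by ring.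
  replace (y + (2 * (INR j + 1) - (INR M + 1)) * t) with (y + t + (2 * INR j - INR M) * t) by ring.
  ring.
Qed.

Lemma binom_sin_sum_even L t y : binom_sin_sum (2 * L) t y = (-4) ^ L * sin t ^ (2 * L) * sin y.
Proof.
  revert y; induction L as [| L IH]; intros y.
  - unfold binom_sin_sum; simpl; replace (y + (2 * 0 - 0) * t) with y by ring; ring.
  - replace (2 * S L)%nat with (S (S (2 * L))) by lia.
    rewrite !binom_sin_sum_succ, !IH.
    replace (y - t - t) with (y - 2 * t) by ring; replace (y - t + t) with y by ring.
    replace (y + t - t) with y by ring; replace (y + t + t) with (y + 2 * t) by ring.
    rewrite sin_minus, sin_plus, sin_2a, cos_2a_sin.
    replace (S (S (2 * L))) with (2 * L + 2)%nat by lia; rewrite pow_add; simpl pow; ring.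
Qed.

Lemma INR_sub_index n L j : (2 * S L <= n)%nat ->
  INR (n + 1 + 2 * j - 2 * S L) = INR n + 2 * INR j - 2 * INR L - 1.
Proof.
  intros h; rewrite minus_INR by lia.
  rewrite !plus_INR, !mult_INR, !S_INR; simpl INR; ring.
Qed.

Lemma chebU_mul_pow_expand n L s : (2 * S L <= n)%nat -> -1 < s < 1 ->
  chebU n s * ((1 - s ^ 2) ^ L * sqrt (1 - s ^ 2))
  = sum_f_R0 (fun j => (- / 4) ^ L * (binom (2 * L) j * (-1) ^ j)
                       * sin (INR (S (S (n + 1 + 2 * j - 2 * S L))) * acos s)) (2 * L).
Proof.
  intros hn hs; pose proof (sqrt_1_sub_sq_pos s hs) as hw.
  transitivity ((- / 4) ^ L * binom_sin_sum (2 * L) (acos s) (INR (S n) * acos s)).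
  - rewrite binom_sin_sum_even, sin_acos_sqrt by lra.
    unfold chebU; rewrite Nat.add_1_r, sin_acos_sqrt by lra.
    replace ((1 - s ^ 2) ^ L) with ((sqrt (1 - s ^ 2) ^ 2) ^ L)
      by (f_equal; rewrite pow2_sqrt; [reflexivity | nra]).
    rewrite pow_mult, <- !Rmult_assoc, <- Rpow_mult_distr.
    replace (- / 4 * -4) with 1 by field; rewrite pow1.
    field; lra.
  - unfold binom_sin_sum; rewrite scal_sum; apply sum_eq; intros j _.
    rewrite (S_INR (S _)), (S_INR (_ - _)), INR_sub_index, S_INR, mult_INR by exact hn.
    simpl INR.
    replace ((INR n + 2 * INR j - 2 * INR L - 1 + 1 + 1) * acos s)
      with ((INR n + 1) * acos s + (2 * INR j - (1 + 1) * INR L) * acos s) by ring.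
    ring.
Qed.

(** * Hadamard finite parts *)

Lemma is_derive_cos_mul_acos_chebU k x : -1 < x < 1 ->
  is_derive (fun y => cos (INR (S k) * acos y)) x (INR (S k) * chebU k x).
Proof.
  intros hx; pose proof (sqrt_1_sub_sq_pos x hx).
  eapply is_derive_eq; [apply is_derive_cos_mul_acos, hx |].
  unfold chebU; rewrite Nat.add_1_r, sin_acos_sqrt by lra; field; lra.
Qed.

Lemma is_derive_chebU k x : -1 < x < 1 ->
  is_derive (chebU (S k)) x
    (((INR k + 3) * chebU k x - (INR k + 1) * chebU (k + 2) x) / (2 * (1 - x ^ 2))).
Proof.
  intros hx; pose proof (sqrt_1_sub_sq_pos x hx) as hw.
  pose proof (sqrt_1_sub_sq_mul_self x ltac:(lra)) as hw2.
  assert (hsin : sin (acos x) <> 0) by (rewrite sin_acos_sqrt by lra; lra).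
  eapply is_derive_eq.
  - apply (is_derive_div (fun s => sin (INR (S k + 1) * acos s)) (fun s => sin (acos s)));
      [apply is_derive_sin_mul_acos, hx | | exact hsin].
    apply (is_derive_comp sin acos); [apply is_derive_sin | apply is_derive_acos, hx].
  - unfold chebU, scal; cbn -[pow sqrt INR].
    set (K := INR (S (k + 1))).
    replace (INR (k + 1)) with (K - 1) by (unfold K; rewrite S_INR, !plus_INR; simpl INR; ring).
    replace (INR (k + 2 + 1)) with (K + 1) by (unfold K; rewrite S_INR, !plus_INR; simpl INR; ring).
    replace (INR k + 3) with (K + 1) by (unfold K; rewrite S_INR, !plus_INR; simpl INR; ring).
    replace (INR k + 1) with (K - 1) by (unfold K; rewrite S_INR, !plus_INR; simpl INR; ring).
    replace ((K - 1) * acos x) with (K * acos x - acos x) by ring.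
    replace ((K + 1) * acos x) with (K * acos x + acos x) by ring.
    rewrite sin_minus, sin_plus, cos_acos, sin_acos_sqrt by lra.
    assert (0 < 1 - x ^ 2) by nra; field [hw2]; lra.
Qed.

Lemma hadamard_fp_succ (D : R -> R) a (F : R -> R) dF x : (1 <= a)%nat -> -1 < x < 1 ->
  (forall y, -1 < y < 1 -> hadamard_fp D a y = F y) -> is_derive F x dF ->
  hadamard_fp D (S a) x = / INR a * dF.
Proof.
  intros ha hx hF hdF; destruct a as [| b]; [lia |].
  change (hadamard_fp D (S (S b)) x) with (/ INR (S b) * Derive (hadamard_fp D (S b)) x).
  rewrite (Derive_ext_loc _ F), (is_derive_unique _ _ _ hdF); [reflexivity |].
  apply (locally_interval _ x (-1) 1); simpl; try lra.
  intros y h1 h2; apply hF; simpl in *; lra.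
Qed.

Lemma hadamard_fp_3_sum_sin_mul_acos (D : R -> R) N (w : nat -> R) (k : nat -> nat) r :
  -1 < r < 1 ->
  (forall s, -1 < s < 1 -> D s = sum_f_R0 (fun j => w j * sin (INR (S (S (k j))) * acos s)) N) ->
  hadamard_fp D 3 r
  = / 2 * sum_f_R0 (fun j => w j * (- PI * (INR (S (S (k j))) *
      (((INR (k j) + 3) * chebU (k j) r - (INR (k j) + 1) * chebU (k j + 2) r)
       / (2 * (1 - r ^ 2)))))) N.
Proof.
  intros hr hD.
  assert (hpv : forall x, -1 < x < 1 -> hadamard_fp D 1 x
            = sum_f_R0 (fun j => w j * (- PI * cos (INR (S (S (k j))) * acos x))) N).
  { intros x hx; apply cauchy_pv_is_lim, (is_lim_pv_approx_ext _ _ x _ hx hD).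
    apply is_lim_pv_approx_sum; [intros; apply continuous_sin_mul_acos | exact hx |].
    intros j _; apply is_lim_pv_sin_mul_acos, hx. }
  assert (hd1 : forall x, -1 < x < 1 -> hadamard_fp D 2 x
            = sum_f_R0 (fun j => w j * (- PI * (INR (S (S (k j))) * chebU (S (k j)) x))) N).
  { intros x hx; erewrite (hadamard_fp_succ D 1 _ _ x (le_n 1) hx hpv)
      by (apply is_derive_sum_f_R0; intros j _;
          apply is_derive_scal, is_derive_scal, is_derive_cos_mul_acos_chebU, hx).
    simpl INR; rewrite Rinv_1; ring. }
  erewrite (hadamard_fp_succ D 2 _ _ r ltac:(lia) hr hd1)
    by (apply is_derive_sum_f_R0; intros j _;
        apply is_derive_scal, is_derive_scal, is_derive_scal, is_derive_chebU, hr).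
  f_equal; simpl; ring.
Qed.

Theorem mainTheorem6 (m n : nat) (r : R) :
  (2 <= m)%nat -> (2 * m <= n)%nat -> Rabs r < 1 ->
  hadamard_fp (fun s => chebU n s * ((1 - s ^ 2) ^ (m - 1) * sqrt (1 - s ^ 2))) 3 r
  = (-1) ^ m * (1 / 2) ^ (2 * m) * (PI / (1 - r ^ 2)) *
    sum_f_R0 (fun j =>
      (-1) ^ j * Binomial.C (2 * m - 2) j *
      (INR n + 3 - 2 * INR m + 2 * INR j) *
      ((INR n + 4 - 2 * INR m + 2 * INR j) * chebU (n + 1 + 2 * j - 2 * m) r
       - (INR n + 2 - 2 * INR m + 2 * INR j) * chebU (n + 3 + 2 * j - 2 * m) r))
      (2 * m - 2).
Proof.
  intros hm hn hr; apply Rabs_def2 in hr.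
  destruct m as [| L]; [lia |]; replace (S L - 1)%nat with L by lia.
  replace (2 * S L - 2)%nat with (2 * L)%nat by lia.
  rewrite (hadamard_fp_3_sum_sin_mul_acos _ (2 * L)
             (fun j => (- / 4) ^ L * (binom (2 * L) j * (-1) ^ j))
             (fun j => n + 1 + 2 * j - 2 * S L)%nat r);
    [| lra | intros s hs; apply chebU_mul_pow_expand; assumption].
  rewrite !scal_sum; apply sum_eq; intros j hj.
  replace (n + 1 + 2 * j - 2 * S L + 2)%nat with (n + 3 + 2 * j - 2 * S L)%nat by lia.
  rewrite binom_C, (S_INR (S _)), (S_INR (_ - _)), INR_sub_index by lia.
  replace (- / 4) with (-1 * / 4) by ring; rewrite Rpow_mult_distr.
  rewrite pow_mult; replace ((1 / 2) ^ 2) with (/ 4) by field.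
  rewrite <- (tech_pow_Rmult (/ 4) L), <- (tech_pow_Rmult (-1) L).
  assert (1 - r ^ 2 <> 0) by nra.
  rewrite S_INR; field; assumption.
Qed.
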